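(* Let $C$ be an arbitrary array of $N$ distinct $n$-bit integers. Then $\mathrm{wkt}_C(\vec e_{\mathsf a})=O(N^2\log N)$ (with an absolute constant, independent of $n$ and $C$).
   Context: Bits are indexed $1$ (least significant) to $n$ (most significant). For an energy vector $\vec e=(e_1,\dots,e_n)$, an inexact comparison of $u,v$ reads each bit $j$ of $u$ and of $v$ independently, flipped with probability $2^{-e_j}$, and orders $u,v$ by the read values; comparisons use fresh independent randomness. The array is sorted by randomized quicksort (pivot chosen uniformly at random from the current subarray, partition by inexact comparisons with the pivot, recursion). $Q(u,v,\vec e)$ is the event that in the output $u,v$ are in the wrong relative order; $\mathrm{wkt}_C(\vec e)=\sum_{1\le a<b\le N}|C[a]-C[b]|\cdot\Pr[Q(C[a],C[b],\vec e)]$ (probability over pivots and comparison errors). $\vec e_{\mathsf a}=(1,2,\dots,n)$. *)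

From Stdlib Require Export Reals.
From mathcomp Require Export all_boot.

Set Implicit Arguments.
Unset Strict Implicit.
Unset Printing Implicit Defensive.

Definition dist (A : Type) := seq (R * A).

Definition dret {A : Type} (a : A) : dist A := [:: (R1, a)].

Definition dbind {A B : Type} (d : dist A) (f : A -> dist B) : dist B :=
  flatten [seq [seq (Rmult pa.1 qb.1, qb.2) | qb <- f pa.2] | pa <- d].

Definition dunif {A : Type} (s : seq A) : dist A :=
  [seq (Rinv (INR (size s)), a) | a <- s].

Definition rsum (s : seq R) : R := foldr Rplus R0 s.

Definition dprob {A : Type} (d : dist A) (P : A -> bool) : R :=
  rsum [seq (if P pa.2 then pa.1 else R0) | pa <- d].

Definition flip_bit (p : R) (b : bool) : dist bool :=
  [:: (p, ~~ b); (Rminus R1 p, b)].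

(* es = (e_{j+1}, ..., e_n); reads bits j+1..n (weights 2^j, ..., 2^(n-1))
   of x, bit number k flipped with probability 2^(-e_k), independently. *)
Fixpoint read_aux (es : seq nat) (j : nat) (x : nat) : dist nat :=
  match es with
  | [::] => dret 0%N
  | ej :: es' =>
      dbind (flip_bit (Rinv (pow 2 ej)) (odd (x %/ expn 2 j)))
        (fun b => dbind (read_aux es' j.+1 x)
           (fun r => dret ((nat_of_bool b) * expn 2 j + r)%N))
  end.

(* energy vector e = (e_1, ..., e_n), e_1 for the least significant bit *)
Definition read_val (e : seq nat) (x : nat) : dist nat := read_aux e 0 x.

(* inexact comparison "x < p", fresh randomness for both reads.
   Ties of the read values are read as "not less" (x goes right). *)
Definition inexact_lt (e : seq nat) (x p : nat) : dist bool :=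
  dbind (read_val e x) (fun rx =>
  dbind (read_val e p) (fun rp => dret (rx < rp)%N)).

Fixpoint partition_dist (e : seq nat) (p : nat) (s : seq nat)
  : dist (seq nat * seq nat) :=
  match s with
  | [::] => dret ([::], [::])
  | x :: s' =>
      dbind (inexact_lt e x p) (fun lt =>
      dbind (partition_dist e p s') (fun lr =>
        dret (if lt then (x :: lr.1, lr.2) else (lr.1, x :: lr.2))))
  end.

(* randomized quicksort with fuel (size s suffices) *)
Fixpoint qs_fuel (e : seq nat) (k : nat) (s : seq nat) : dist (seq nat) :=
  match k with
  | 0 => dret s
  | k'.+1 =>
      if s is [::] then dret [::] else
      dbind (dunif (iota 0 (size s))) (fun i =>
        let p := nth 0%N s i in
        let rest := take i s ++ drop i.+1 s in
        dbind (partition_dist e p rest) (fun lr =>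
        dbind (qs_fuel e k' lr.1) (fun l =>
        dbind (qs_fuel e k' lr.2) (fun r =>
          dret (l ++ p :: r)))))
  end.

Definition quicksort (e : seq nat) (s : seq nat) : dist (seq nat) :=
  qs_fuel e (size s) s.

Definition wrong_order (u v : nat) (out : seq nat) : bool :=
  if (u < v)%N then (index v out < index u out)%N
  else (index u out < index v out)%N.

Definition wkt (C : seq nat) (e : seq nat) : R :=
  let N := size C in
  let d := quicksort e C in
  rsum [seq Rmult (Rabs (Rminus (INR (nth 0%N C ab.1)) (INR (nth 0%N C ab.2))))
             (dprob d (wrong_order (nth 0%N C ab.1) (nth 0%N C ab.2)))
       | ab <- [seq ab <- [seq (a, b) | a <- iota 0 N, b <- iota 0 N]
                | (ab.1 < ab.2)%N]].

Definition e_a (n : nat) : seq nat := iota 1 n.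

(* Under [e_a], bit j (counting from 0) is flipped with probability 2^-(j+1), so a
   read value is off by at least 2^k with probability at most 2^-k: the bits below k
   move it by less than 2^k, and flips at or above k have total probability at most
   2^-k.  Hence an element at distance d from the pivot lands on the wrong side with
   probability O(1/d), at expected weighted cost O(1).

   Let the cost of an output be the sum of |x - y| over the ordered pairs it puts in
   the wrong order.  After partitioning s around p into L and R, sorted into l and r,
   an inversion of l ++ p :: r lies inside l, inside r, or is bounded by the distances
   to p of its elements that lie on the wrong side of p.  So the cost is at most
   the two recursive costs plus 2|s| times the misplaced weight, whose expectation is
   at most 8|s|.  The larger side has expected size at most that of the exact split
   plus the expected number of misplaced elements (at most 129 + |s|/8), and the exact
   split averages to at most 3|s|/4 over a uniform pivot.  Since
   F(a) + F(b) <= K ln m * m * max(a, b) for F(m) = K m^2 ln m and a + b <= m,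
   induction gives an expected cost of at most F(|C|), which bounds wkt. *)

From HB Require Import structures.
From Stdlib Require Import Reals Lra Lia.
From mathcomp Require Import all_boot zify.

Set Implicit Arguments.
Unset Strict Implicit.
Unset Printing Implicit Defensive.

Open Scope R_scope.
Arguments rsum : simpl never.

Lemma rsum_nil : rsum [::] = 0. Proof. by []. Qed.
Lemma rsum_cons a s : rsum (a :: s) = a + rsum s. Proof. by []. Qed.

HB.instance Definition _ := Monoid.isComLaw.Build R 0 Rplus
  (fun a b c => esym (Rplus_assoc a b c)) Rplus_comm Rplus_0_l.

Lemma rsum_big (T : Type) (s : seq T) (f : T -> R) :
  rsum (map f s) = \big[Rplus/0]_(x <- s) f x.
Proof. by elim: s => [|a s IH]; rewrite ?big_nil ?big_cons -?IH. Qed.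

Lemma rsum_cat s1 s2 : rsum (s1 ++ s2) = rsum s1 + rsum s2.
Proof. by elim: s1 => [|a s1 IH]; rewrite /= ?rsum_cons ?IH /rsum /=; lra. Qed.

Section RsumMap.
Variable T : Type.
Implicit Types (s : seq T) (f g : T -> R).

Lemma rsum_mapD s f g :
  rsum [seq f x + g x | x <- s] = rsum (map f s) + rsum (map g s).
Proof. by rewrite !rsum_big big_split. Qed.

Lemma rsum_mapZ s c f : rsum [seq c * f x | x <- s] = c * rsum (map f s).
Proof. by elim: s => [|a s IH]; rewrite /= ?rsum_cons ?IH /rsum /=; lra. Qed.

Lemma rsum_map_const s c : rsum [seq c | _ <- s] = INR (size s) * c.
Proof.
elim: s => [|a s IH]; first by rewrite rsum_nil /=; lra.
by rewrite map_cons rsum_cons IH (S_INR (size s)); lra.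
Qed.

Lemma rsum_map_indicator s (P : pred T) :
  rsum [seq if P x then 1 else 0 | x <- s] = INR (count P s).
Proof.
elim: s => [|a s IH] //=; rewrite rsum_cons IH plus_INR.
by case: (P a) => /=; lra.
Qed.

Lemma rsum_map_nat s (h : T -> nat) :
  rsum [seq INR (h x) | x <- s] = INR (sumn (map h s)).
Proof. by elim: s => [|a s IH] //=; rewrite rsum_cons IH plus_INR. Qed.

Lemma rsum_filter_le s (P : pred T) f :
  (forall x, 0 <= f x) -> rsum (map f (filter P s)) <= rsum (map f s).
Proof.
move=> f_ge0; elim: s => [|a s IH] /=; first lra.
by have := f_ge0 a; case: (P a); rewrite /= !rsum_cons; lra.
Qed.

End RsumMap.

Section RsumMapEq.
Variable T : eqType.
Implicit Types (s : seq T) (f g : T -> R).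

Lemma rsum_map_le s f g :
  {in s, forall x, f x <= g x} -> rsum (map f s) <= rsum (map g s).
Proof.
elim: s => [|a s IH] /= le_fg; first lra.
rewrite !rsum_cons; have := le_fg a (mem_head _ _).
have := IH (fun x xs => le_fg x (@mem_behead _ (a :: s) x xs)); lra.
Qed.

Lemma rsum_perm s1 s2 f : perm_eq s1 s2 -> rsum (map f s1) = rsum (map f s2).
Proof. by move=> eq12; rewrite !rsum_big; apply: perm_big. Qed.

Lemma rsum_restrict s A f : uniq s -> uniq A -> {subset A <= s} ->
  rsum [seq if x \in A then f x else 0 | x <- s] = rsum (map f A).
Proof.
move=> uniq_s uniq_A sub_As; rewrite !rsum_big -big_mkcond -big_filter /=.
apply: perm_big; apply: uniq_perm; rewrite ?filter_uniq // => x.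
by rewrite mem_filter; case xA: (x \in A); rewrite ?(sub_As x xA).
Qed.

End RsumMapEq.

(** * Expectation over finite distributions *)

Definition expect {A} (d : dist A) (f : A -> R) : R :=
  rsum [seq pa.1 * f pa.2 | pa <- d].

Definition mass {A} (d : dist A) : R := expect d (fun _ => 1).

Definition supported {A} (d : dist A) (P : A -> Prop) : Prop :=
  List.Forall (fun pa : R * A => 0 <= pa.1 /\ P pa.2) d.

Record proba {A} (d : dist A) (P : A -> Prop) : Prop := Proba {
  proba_supp : supported d P;
  proba_mass : mass d = 1 }.

Section Expectation.
Variables A B : Type.
Implicit Types (d : dist A) (f g : A -> R) (P : A -> Prop).

Lemma eq_expect d f g :
  (forall a, f a = g a) -> expect d f = expect d g.
Proof. by move=> eq_fg; congr rsum; apply: eq_map => pa; rewrite eq_fg. Qed.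

Lemma expect_cons w a d f : expect ((w, a) :: d) f = w * f a + expect d f.
Proof. by []. Qed.

Lemma expect_ret a f : expect (dret a) f = f a.
Proof. by rewrite /expect /= rsum_cons rsum_nil; lra. Qed.

Lemma expect_bind d (k : A -> dist B) (f : B -> R) :
  expect (dbind d k) f = expect d (fun a => expect (k a) f).
Proof.
elim: d => [|[w a] d IH] //.
rewrite /dbind /= -/(dbind d k) {1}/expect map_cat rsum_cat.
rewrite -/(expect (dbind d k) f) IH expect_cons -map_comp /expect -rsum_mapZ.
by congr (rsum _ + _); apply: eq_map => -[v b] /=; lra.
Qed.

Lemma expectD d f g : expect d (fun a => f a + g a) = expect d f + expect d g.
Proof. by rewrite /expect -rsum_mapD; congr rsum; apply: eq_map => pa; lra. Qed.

Lemma expectZ d c f : expect d (fun a => c * f a) = c * expect d f.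
Proof. by rewrite /expect -rsum_mapZ; congr rsum; apply: eq_map => pa; lra. Qed.

Lemma expect_const d c : expect d (fun _ => c) = c * mass d.
Proof. by rewrite /mass -expectZ Rmult_1_r. Qed.

Lemma expect_le d P f g : supported d P ->
  (forall a, P a -> f a <= g a) -> expect d f <= expect d g.
Proof.
move=> supp_d le_fg; elim: supp_d => [|[w a] d' [/= w_ge0 Pa] _ IH].
  by rewrite /expect /= rsum_nil; lra.
by rewrite !expect_cons; have := le_fg a Pa; nra.
Qed.

Lemma expect_ext d P f g : supported d P ->
  (forall a, P a -> f a = g a) -> expect d f = expect d g.
Proof.
by move=> supp_d eq_fg; apply: Rle_antisym; apply: (expect_le supp_d) => a Pa;
  rewrite eq_fg //; lra.
Qed.

Lemma expect_ge0 d P f : supported d P ->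
  (forall a, P a -> 0 <= f a) -> 0 <= expect d f.
Proof.
move=> supp_d f_ge0; rewrite -(Rmult_0_l (mass d)) -expect_const.
exact: expect_le supp_d f_ge0.
Qed.

Lemma expect_le_const d P f c : proba d P ->
  (forall a, P a -> f a <= c) -> expect d f <= c.
Proof.
move=> [supp_d mass_d] le_fc; rewrite -[c]Rmult_1_r -mass_d -expect_const.
exact: expect_le supp_d le_fc.
Qed.

Lemma expect_rsum d (s : seq B) (f : B -> A -> R) :
  expect d (fun a => rsum [seq f y a | y <- s]) = rsum [seq expect d (f y) | y <- s].
Proof.
elim: s => [|y s IH] /=.
  by rewrite -/(rsum [::]) expect_const rsum_nil; lra.
by rewrite rsum_cons -IH -expectD.
Qed.

Lemma dprob_expect d (P : pred A) : dprob d P = expect d (fun a => if P a then 1 else 0).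
Proof.
elim: d => [|[w a] d IH] //; rewrite expect_cons /dprob /= rsum_cons -/(dprob d P) IH.
by case: (P a); lra.
Qed.

Lemma supported_ret a P : P a -> supported (dret a) P.
Proof. by move=> Pa; constructor; [split=> //=; lra | constructor]. Qed.

Lemma supported_bind d (k : A -> dist B) P (Q : B -> Prop) : supported d P ->
  (forall a, P a -> supported (k a) Q) -> supported (dbind d k) Q.
Proof.
move=> supp_d supp_k; elim: supp_d => [|[w a] d' [/= w_ge0 Pa] _ IH]; first by constructor.
rewrite /supported /dbind /= -/(dbind d' k); apply/List.Forall_app; split=> //.
elim: (supp_k a Pa) => [|[v b] l [/= v_ge0 Qb] _ IHl] /=; constructor=> //.
by split=> //=; nra.
Qed.

Lemma proba_ret a P : P a -> proba (dret a) P.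
Proof. by move=> Pa; split; [exact: supported_ret | exact: expect_ret]. Qed.

Lemma proba_bind d (k : A -> dist B) P (Q : B -> Prop) : proba d P ->
  (forall a, P a -> proba (k a) Q) -> proba (dbind d k) Q.
Proof.
move=> [supp_d mass_d] proba_k; split.
  by apply: supported_bind supp_d _ => a /proba_k [].
rewrite -mass_d /mass expect_bind.
by apply: expect_ext supp_d _ => a /proba_k [_ mass_ka]; exact: mass_ka.
Qed.

End Expectation.

Lemma expect_affine A (d : dist A) c1 c2 (g : A -> R) : mass d = 1 ->
  expect d (fun a => c1 * g a + c2) = c1 * expect d g + c2.
Proof. by move=> mass_d; rewrite expectD expectZ expect_const mass_d Rmult_1_r. Qed.

Lemma expect_pairD A B (d1 : dist A) (d2 : dist B) (f : A -> R) (g : B -> R) c :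
  mass d1 = 1 -> mass d2 = 1 ->
  expect d1 (fun a => expect d2 (fun b => f a + g b + c)) = expect d1 f + expect d2 g + c.
Proof.
move=> mass1 mass2.
under eq_expect => a do rewrite expectD expectD !expect_const mass2 !Rmult_1_r.
by rewrite expectD expectD !expect_const mass1 !Rmult_1_r.
Qed.

Lemma expect_unif (T : Type) (s : seq T) f :
  expect (dunif s) f = / INR (size s) * rsum (map f s).
Proof. by rewrite /dunif /expect -map_comp -rsum_mapZ. Qed.

Lemma proba_unif m : (0 < m)%N -> proba (dunif (iota 0 m)) (fun i => (i < m)%N).
Proof.
move=> m_gt0; have m_pos : 0 < INR m by apply: lt_0_INR; apply/ltP.
split; last by rewrite /mass expect_unif rsum_map_const size_iota; field; lra.
have : {subset iota 0 m <= [pred i | i < m]%N} by move=> i; rewrite mem_iota.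
have : 0 <= / INR (size (iota 0 m)) by apply/Rlt_le/Rinv_0_lt_compat; rewrite size_iota.
rewrite /dunif; move: (/ _) => c c_ge0.
elim: (iota 0 m) => [|i s IH] sub_s /=; constructor.
  by split=> //; exact: sub_s (mem_head _ _).
by apply: IH => j js; apply: sub_s; rewrite inE js orbT.
Qed.

(** * Inexact reads under [e_a] *)

Definition absdiff (a b : nat) : nat := (a - b) + (b - a).

Lemma INR_absdiff a b : Rabs (INR a - INR b) = INR (absdiff a b).
Proof.
rewrite /absdiff; case: (leqP a b) => [le_ab | /ltnW le_ba].
  rewrite (eqP le_ab) add0n minus_INR; last exact/leP.
  by rewrite Rabs_left1; have := le_INR _ _ (elimT leP le_ab); lra.
rewrite (eqP le_ba) addn0 minus_INR; last exact/leP.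
by rewrite Rabs_right; have := le_INR _ _ (elimT leP le_ba); lra.
Qed.

Lemma INR_expn2 k : INR (2 ^ k) = pow 2 k.
Proof. by elim: k => [|k IH] //; rewrite expnS mult_INR IH. Qed.

Lemma pow2_gt0 k : 0 < pow 2 k.
Proof. by apply: pow_lt; lra. Qed.

Lemma invpow2_in01 k : 0 <= / pow 2 k <= 1.
Proof.
have ge1 : 1 <= pow 2 k by apply: pow_R1_Rle; lra.
split; first exact/Rlt_le/Rinv_0_lt_compat/pow2_gt0.
by rewrite -Rinv_1; apply: Rinv_le_contravar; lra.
Qed.

Fixpoint bit_slice (j m x : nat) : nat :=
  if m is m'.+1 then (odd (x %/ 2 ^ j) * 2 ^ j + bit_slice j.+1 m' x)%N else 0%N.

Lemma modn_exp2S x j : (x %% 2 ^ j.+1 = x %% 2 ^ j + odd (x %/ 2 ^ j) * 2 ^ j)%N.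
Proof.
rewrite expnSr mulnC -modn2 modn_divl.
have -> : (x %% 2 ^ j = x %% (2 * 2 ^ j) %% 2 ^ j)%N by rewrite modn_dvdm // dvdn_mull.
by rewrite addnC -divn_eq.
Qed.

Lemma bit_slice_mod j m x : (bit_slice j m x + x %% 2 ^ j = x %% 2 ^ (j + m))%N.
Proof.
elim: m j => [|m IH] j /=; first by rewrite addn0.
by have := IH j.+1; have := modn_exp2S x j; rewrite addSnnS; lia.
Qed.

Lemma bit_slice_full n x : (x < 2 ^ n)%N -> bit_slice 0 n x = x.
Proof. by move=> x_lt; have := bit_slice_mod 0 n x; rewrite modn1 addn0 add0n modn_small. Qed.

Lemma expect_flip p b (g : bool -> R) :
  expect (flip_bit p b) g = p * g (~~ b) + (1 - p) * g b.
Proof. by rewrite /flip_bit !expect_cons /expect /= rsum_nil; change R1 with 1; lra. Qed.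

Lemma proba_flip p b : 0 <= p <= 1 -> proba (flip_bit p b) (fun _ => True).
Proof.
move=> p01; split; last by rewrite /mass expect_flip; lra.
by do 2 (constructor; first by split=> //=; change R1 with 1; lra); constructor.
Qed.

Lemma proba_read es j x : proba (read_aux es j x) (fun _ => True).
Proof.
elim: es j => [|e es IH] j /=; first exact: proba_ret.
apply: proba_bind (proba_flip _ (invpow2_in01 e)) _ => b _.
by apply: proba_bind (IH j.+1) _ => r _; apply: proba_ret.
Qed.

Lemma expect_read_cons e es j x (f : nat -> R) :
  let b := odd (x %/ 2 ^ j) in
  expect (read_aux (e :: es) j x) f =
    / pow 2 e * expect (read_aux es j.+1 x) (fun r => f (~~ b * 2 ^ j + r)%N)
  + (1 - / pow 2 e) * expect (read_aux es j.+1 x) (fun r => f (b * 2 ^ j + r)%N).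
Proof.
by rewrite /= expect_bind expect_flip !expect_bind; under eq_expect => r do rewrite expect_ret;
  under [in X in _ + _ * X]eq_expect => r do rewrite expect_ret.
Qed.

(* Flips of bits [j..k-1] (none if [k <= j]) move the value by at most
   [2^k - 2^(minn j k)], so exceeding that needs a flip at or above [maxn j k],
   which has probability at most [2^-(maxn j k)]. *)
Lemma read_slice_tail j m x k :
  expect (read_aux (iota j.+1 m) j x)
    (fun r => if (2 ^ k - 2 ^ minn j k < absdiff r (bit_slice j m x))%N then 1 else 0)
  <= / pow 2 (maxn j k).
Proof.
elim: m j => [|m IH] j.
  by rewrite /= expect_ret /absdiff /=; have [] := invpow2_in01 (maxn j k).
rewrite [iota _ _]/= [bit_slice _ _ _]/= expect_read_cons.
set b := odd (x %/ 2 ^ j); set T := bit_slice j.+1 m x.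
set rd := read_aux (iota j.+2 m) j.+1 x.
have [p_ge0 p_le1] := invpow2_in01 j.+1.
have bound (P : nat -> bool) :
    (forall r, P r -> (2 ^ k - 2 ^ minn j.+1 k < absdiff r T)%N) ->
    expect rd (fun r => if P r then 1 else 0) <= / pow 2 (maxn j.+1 k).
  move=> P_tail; apply: Rle_trans (IH j.+1); apply: expect_le (proba_supp (proba_read _ _ _)) _.
  move=> r _; case Pr: (P r); last by case: ifP; lra.
  by rewrite (P_tail r Pr); lra.
have ind01 (P : nat -> bool) : 0 <= expect rd (fun r => if P r then 1 else 0) <= 1.
  split; first by apply: expect_ge0 (proba_supp (proba_read _ _ _)) _ => r _; case: ifP; lra.
  by apply: expect_le_const (proba_read _ _ _) _ => r _; case: ifP; lra.
case: (leqP k j) => [le_kj | lt_jk].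
- have half : / pow 2 j.+1 + / pow 2 j.+1 = / pow 2 j.
    by have := pow2_gt0 j; rewrite /= Rinv_mult; lra.
  have [_ flipped_le1] := ind01 (fun r => 0 < absdiff (~~ b * 2 ^ j + r) (b * 2 ^ j + T))%N.
  have [kept_ge0 _] := ind01 (fun r => 0 < absdiff (b * 2 ^ j + r) (b * 2 ^ j + T))%N.
  have kept_le : expect rd
      (fun r => if (0 < absdiff (b * 2 ^ j + r) (b * 2 ^ j + T))%N then 1 else 0)
      <= / pow 2 j.+1.
    have := bound (fun r => 0 < absdiff (b * 2 ^ j + r) (b * 2 ^ j + T))%N.
    rewrite (maxn_idPl (leqW le_kj)) (minn_idPr (leqW le_kj)) subnn; apply.
    by move=> r; rewrite /absdiff; lia.
  rewrite subnn -half; nra.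
- have step (b' : bool) : expect rd
      (fun r => if (2 ^ k - 2 ^ j < absdiff (b' * 2 ^ j + r) (b * 2 ^ j + T))%N then 1 else 0)
      <= / pow 2 k.
    rewrite -{2}(maxn_idPr lt_jk); apply: bound => r.
    have := leq_pexp2l (isT : 0 < 2)%N lt_jk; rewrite (minn_idPl lt_jk) expnS /absdiff.
    by case: b' b => -[]; rewrite ?mul1n ?mul0n; lia.
  by have := step (~~ b); have := step b; nra.
Qed.

Lemma read_tail n x k : (x < 2 ^ n)%N ->
  dprob (read_val (e_a n) x) (fun r => 2 ^ k <= absdiff r x)%N <= / pow 2 k.
Proof.
move=> x_lt; have := read_slice_tail 0 n x k.
rewrite bit_slice_full // min0n max0n expn0 dprob_expect; apply: Rle_trans.
apply: expect_le (proba_supp (proba_read _ _ _)) _ => r _.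
case: ifP => [far | _]; last by case: ifP; lra.
by rewrite subn1 prednK ?expn_gt0 // far; lra.
Qed.

Definition misread (x p : nat) (lt : bool) : bool := lt != (x < p)%N.

Lemma proba_inexact_lt e x p : proba (inexact_lt e x p) (fun _ => True).
Proof.
apply: proba_bind (proba_read _ _ _) _ => rx _.
by apply: proba_bind (proba_read _ _ _) _ => rp _; apply: proba_ret.
Qed.

Lemma misread_prob_in01 e x p : 0 <= dprob (inexact_lt e x p) (misread x p) <= 1.
Proof.
rewrite dprob_expect; split.
  by apply: expect_ge0 (proba_supp (proba_inexact_lt _ _ _)) _ => lt _; case: ifP; lra.
by apply: expect_le_const (proba_inexact_lt _ _ _) _ => lt _; case: ifP; lra.
Qed.

Lemma misread_far k x p rx rp : (2 ^ k.+1 <= absdiff x p)%N ->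
  (absdiff rx x < 2 ^ k)%N -> (absdiff rp p < 2 ^ k)%N -> ~~ misread x p (rx < rp)%N.
Proof. by rewrite /misread /absdiff expnS; case: ltnP; case: ltnP; lia. Qed.

Lemma misread_prob_far n k x p : (x < 2 ^ n)%N -> (p < 2 ^ n)%N ->
  (2 ^ k.+1 <= absdiff x p)%N ->
  dprob (inexact_lt (e_a n) x p) (misread x p) <= 2 * / pow 2 k.
Proof.
move=> x_lt p_lt far; rewrite dprob_expect /inexact_lt expect_bind.
have := read_tail k x_lt; have := read_tail k p_lt; rewrite !dprob_expect => tail_p tail_x.
set far_r := fun r y => if (2 ^ k <= absdiff r y)%N then 1 else 0.
apply: Rle_trans (_ : expect (read_val (e_a n) x) (fun rx => far_r rx x + / pow 2 k) <= _).
  apply: expect_le (proba_supp (proba_read _ _ _)) _ => rx _; rewrite expect_bind.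
  apply: Rle_trans (_ : expect (read_val (e_a n) p) (fun rp => far_r rx x + far_r rp p) <= _).
    apply: expect_le (proba_supp (proba_read _ _ _)) _ => rp _; rewrite expect_ret /far_r.
    case: ifP => [mis|_]; last by do 2 case: ifP; lra.
    case: ifP => [_|near_x]; first by case: ifP; lra.
    case: ifP => [_|near_p]; first lra.
    by move: mis; rewrite (negbTE (misread_far far _ _)) // ltnNge ?near_x ?near_p.
  rewrite expectD expect_const (proba_mass (proba_read _ _ _)); rewrite /far_r /=; lra.
rewrite expectD expect_const (proba_mass (proba_read _ _ _)); rewrite /far_r /=; lra.
Qed.

Lemma misread_weight n x p : (x < 2 ^ n)%N -> (p < 2 ^ n)%N -> x <> p ->
  INR (absdiff x p) * dprob (inexact_lt (e_a n) x p) (misread x p) <= 8.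
Proof.
move=> x_lt p_lt neq_xp.
have d_gt0 : (0 < absdiff x p)%N by rewrite /absdiff; lia.
have := trunc_logP (isT : 1 < 2)%N d_gt0; have := trunc_log_ltn (absdiff x p) (isT : 1 < 2)%N.
have [pr_ge0 pr_le1] := misread_prob_in01 (e_a n) x p.
case: (trunc_log 2 (absdiff x p)) => [|k] d_lt d_ge.
  have -> : absdiff x p = 1%N by rewrite expn1 in d_lt; lia.
  by change (INR 1) with 1; lra.
have d_lt' : INR (absdiff x p) < 4 * pow 2 k.
  have -> : 4 * pow 2 k = INR (2 ^ k.+2) by rewrite INR_expn2 /=; lra.
  exact/lt_INR/ltP.
have := misread_prob_far x_lt p_lt d_ge; have := pow2_gt0 k; have := pos_INR (absdiff x p).
move: (pow 2 k) d_lt' => P d_lt' d_ge0 P_gt0 pr_le.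
have -> : 8 = 4 * P * (2 * / P) by field; lra.
by apply: Rmult_le_compat => //; lra.
Qed.

(** * Partitioning around a pivot *)

Lemma proba_partition e p s :
  proba (partition_dist e p s) (fun lr => perm_eq (lr.1 ++ lr.2) s).
Proof.
elim: s => [|x s IH] /=; first exact: proba_ret.
apply: proba_bind (proba_inexact_lt e x p) _ => -[] _;
  apply: proba_bind IH _ => -[L R] /= perm_LR; apply: proba_ret => /=.
  by rewrite perm_cons.
by rewrite -cat1s perm_catCA perm_cons.
Qed.

Lemma expect_partition e p s (hL hR : nat -> R) :
  expect (partition_dist e p s) (fun lr => rsum (map hL lr.1) + rsum (map hR lr.2)) =
  rsum [seq expect (inexact_lt e x p) (fun lt => if lt then hL x else hR x) | x <- s].
Proof.
elim: s => [|x s IH] /=; first by rewrite expect_ret /= !rsum_nil; lra.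
have [_ mass_part] := proba_partition e p s.
rewrite expect_bind rsum_cons -IH -[expect (partition_dist _ _ _) _]Rmult_1_r.
rewrite -(proba_mass (proba_inexact_lt e x p)) -expect_const -expectD.
apply: eq_expect => lt; rewrite expect_bind -[if lt then _ else _]Rmult_1_r -mass_part.
rewrite -expect_const -expectD; apply: eq_expect => -[L R]; rewrite expect_ret.
by case: lt; rewrite /= rsum_cons; lra.
Qed.

Definition misplaced (p : nat) (f : nat -> R) (lr : seq nat * seq nat) : R :=
  rsum [seq if (p <= x)%N then f x else 0 | x <- lr.1]
  + rsum [seq if (x < p)%N then f x else 0 | x <- lr.2].

Lemma expect_misplaced e p s f :
  expect (partition_dist e p s) (misplaced p f) =
  rsum [seq f x * dprob (inexact_lt e x p) (misread x p) | x <- s].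
Proof.
rewrite expect_partition; congr rsum; apply: eq_map => x.
rewrite dprob_expect -expectZ; apply: eq_expect => lt.
by rewrite /misread; case: lt; case: ltnP; rewrite /=; lra.
Qed.

Section MisplacedBounds.
Variables (n p : nat) (s : seq nat).
Hypotheses (p_lt : (p < 2 ^ n)%N) (s_lt : all (fun x => x < 2 ^ n)%N s) (p_notin : p \notin s).

Lemma misread_weight_in x : x \in s ->
  INR (absdiff x p) * dprob (inexact_lt (e_a n) x p) (misread x p) <= 8.
Proof.
move=> xs; apply: misread_weight p_lt _; first exact: (allP s_lt).
by move=> eq_xp; move: p_notin; rewrite -eq_xp xs.
Qed.

Lemma expect_misplaced_weight :
  expect (partition_dist (e_a n) p s) (misplaced p (fun x => INR (absdiff x p)))
  <= 8 * INR (size s).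
Proof.
rewrite expect_misplaced Rmult_comm -rsum_map_const.
exact: rsum_map_le misread_weight_in.
Qed.

Lemma count_near (T : nat) : uniq s -> (count (fun x => absdiff x p <= T) s <= 2 * T + 1)%N.
Proof.
move=> uniq_s; rewrite -size_filter -[(2 * T + 1)%N](size_iota (p - T)).
apply: uniq_leq_size; first exact: filter_uniq.
by move=> x; rewrite mem_filter mem_iota /absdiff => /andP [near _]; lia.
Qed.

(* At most 129 elements lie within distance 64 of the pivot; the others are misread
   with probability at most 8/64. *)
Lemma expect_misplaced_count : uniq s ->
  expect (partition_dist (e_a n) p s) (misplaced p (fun _ => 1)) <= 129 + INR (size s) / 8.
Proof.
move=> uniq_s; rewrite expect_misplaced.
apply: Rle_trans (_ : rsum [seq (if (absdiff x p <= 64)%N then 1 else 0) + / 8 | x <- s] <= _).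
  apply: rsum_map_le => x xs; have := misread_weight_in xs.
  have [pr_ge0 pr_le1] := misread_prob_in01 (e_a n) x p.
  case: ifP => [_|far]; first lra.
  have : 64 < INR (absdiff x p) by rewrite (_ : 64 = INR 64); [apply/lt_INR/ltP; lia | simpl; lra].
  nra.
rewrite rsum_mapD rsum_map_indicator rsum_map_const.
have := le_INR _ _ (elimT leP (count_near 64 uniq_s)); rewrite plus_INR mult_INR /=; lra.
Qed.

End MisplacedBounds.

(** * The cost of an output order *)

Lemma rsum2_restrict (T : eqType) (s A : seq T) (f : T -> T -> R) :
  uniq s -> uniq A -> {subset A <= s} ->
  rsum [seq rsum [seq if (x \in A) && (y \in A) then f x y else 0 | y <- s] | x <- s]
  = rsum [seq rsum [seq f x y | y <- A] | x <- A].
Proof.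
move=> uniq_s uniq_A sub_As; rewrite -(rsum_restrict _ uniq_s uniq_A sub_As).
congr rsum; apply: eq_map => x.
case: (x \in A) => /=; first by rewrite rsum_restrict.
by rewrite rsum_map_const Rmult_0_r.
Qed.

Definition pair_cost (x y : nat) (out : seq nat) : R :=
  INR (absdiff x y) * (if wrong_order x y out then 1 else 0).

Definition sort_cost (s out : seq nat) : R :=
  rsum [seq rsum [seq pair_cost x y out | y <- s] | x <- s].

Lemma sort_cost_perm s t out : perm_eq s t -> sort_cost s out = sort_cost t out.
Proof.
move=> eq_st; rewrite /sort_cost (rsum_perm _ eq_st); congr rsum.
by apply: eq_map => x; apply: rsum_perm.
Qed.

Lemma pair_costC x y out : pair_cost x y out = pair_cost y x out.
Proof.
rewrite /pair_cost /absdiff addnC /wrong_order.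
by case: (ltngtP x y) => // ->.
Qed.

Lemma pair_cost_ge0 x y out : 0 <= pair_cost x y out.
Proof. by rewrite /pair_cost; have := pos_INR (absdiff x y); case: ifP; lra. Qed.

Lemma pair_cost_before x y out : (index x out < index y out)%N ->
  pair_cost x y out = INR (if (y < x)%N then absdiff x y else 0%N).
Proof.
move=> before; rewrite /pair_cost /wrong_order.
case: (ltngtP x y) => [lt_xy|lt_yx|eq_xy].
- by rewrite ltnNge ltnW //= Rmult_0_r.
- by rewrite before Rmult_1_r.
- by move: before; rewrite eq_xy ltnn.
Qed.

Definition misplaced_left (p x : nat) : R := INR (if (p <= x)%N then absdiff x p else 0%N).
Definition misplaced_right (p x : nat) : R := INR (if (x < p)%N then absdiff x p else 0%N).

Lemma misplaced_left_ge0 p x : 0 <= misplaced_left p x.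
Proof. exact: pos_INR. Qed.

Lemma misplaced_right_ge0 p x : 0 <= misplaced_right p x.
Proof. exact: pos_INR. Qed.

Section PivotSplit.
Variables (p : nat) (l r : seq nat).
Hypothesis uniq_plr : uniq (p :: l ++ r).
Let out := l ++ p :: r.

Lemma pivot_notin_l : p \notin l.
Proof. by move: uniq_plr; rewrite cons_uniq mem_cat negb_or => /andP [/andP []]. Qed.

Lemma pivot_notin_r : p \notin r.
Proof. by move: uniq_plr; rewrite cons_uniq mem_cat negb_or => /andP [/andP []]. Qed.

Lemma notin_l_of_r x : x \in r -> x \notin l.
Proof.
move: uniq_plr; rewrite cons_uniq cat_uniq => /andP [_ /and3P [_ /hasPn disj _]] xr.
exact: disj.
Qed.

Lemma notin_r_of_l x : x \in l -> x \notin r.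
Proof. by apply: contraL => /notin_l_of_r. Qed.

Lemma index_out_l x : x \in l -> index x out = index x l.
Proof. by move=> xl; rewrite /out index_cat xl. Qed.

Lemma index_out_p : index p out = size l.
Proof. by rewrite /out index_cat (negbTE pivot_notin_l) /= eqxx addn0. Qed.

Lemma index_out_r x : x \in r -> index x out = (size l + (index x r).+1)%N.
Proof.
move=> xr; rewrite /out index_cat (negbTE (notin_l_of_r xr)) /=.
by case: eqP => [eq_px|//]; move: pivot_notin_r; rewrite eq_px xr.
Qed.

Lemma pair_cost_out_l x y : x \in l -> y \in l -> pair_cost x y out = pair_cost x y l.
Proof. by move=> xl yl; rewrite /pair_cost /wrong_order !index_out_l. Qed.

Lemma pair_cost_out_r x y : x \in r -> y \in r -> pair_cost x y out = pair_cost x y r.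
Proof. by move=> xr yr; rewrite /pair_cost /wrong_order !index_out_r // !ltn_add2l !ltnS. Qed.

Lemma pair_cost_out_lp x : x \in l -> pair_cost x p out <= misplaced_left p x.
Proof.
move=> xl; rewrite pair_cost_before; last by rewrite index_out_l // index_out_p index_mem.
rewrite /misplaced_left; apply/le_INR/leP; rewrite /absdiff.
by repeat case: ifP; lia.
Qed.

Lemma pair_cost_out_pr y : y \in r -> pair_cost p y out <= misplaced_right p y.
Proof.
move=> yr; rewrite pair_cost_before; last by rewrite index_out_p index_out_r //; lia.
rewrite /misplaced_right; apply/le_INR/leP; rewrite /absdiff.
by repeat case: ifP; lia.
Qed.

Lemma pair_cost_out_lr x y : x \in l -> y \in r ->
  pair_cost x y out <= misplaced_left p x + misplaced_right p y.
Proof.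
move=> xl yr; rewrite pair_cost_before; last first.
  by rewrite index_out_l ?index_out_r // ltn_addr ?index_mem.
rewrite /misplaced_left /misplaced_right -plus_INR; apply/le_INR/leP; rewrite /absdiff.
by repeat case: ifP; lia.
Qed.

Definition split_weight z : R :=
  (if z \in l then misplaced_left p z else 0) + (if z \in r then misplaced_right p z else 0).

Lemma split_weight_ge0 z : 0 <= split_weight z.
Proof.
have := misplaced_left_ge0 p z; have := misplaced_right_ge0 p z.
by rewrite /split_weight; do 2 case: ifP; lra.
Qed.

Lemma split_weight_l z : z \in l -> split_weight z = misplaced_left p z.
Proof. by move=> zl; rewrite /split_weight zl (negbTE (notin_r_of_l zl)) Rplus_0_r. Qed.

Lemma split_weight_r z : z \in r -> split_weight z = misplaced_right p z.
Proof. by move=> zr; rewrite /split_weight zr (negbTE (notin_l_of_r zr)) Rplus_0_l. Qed.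

Lemma split_weight_p : split_weight p = 0.
Proof. by rewrite /split_weight (negbTE pivot_notin_l) (negbTE pivot_notin_r) Rplus_0_r. Qed.

Lemma pair_cost_out_le x y : x \in p :: l ++ r -> y \in p :: l ++ r ->
  pair_cost x y out <= (if (x \in l) && (y \in l) then pair_cost x y l else 0)
    + (if (x \in r) && (y \in r) then pair_cost x y r else 0)
    + (split_weight x + split_weight y).
Proof.
have pl := negbTE pivot_notin_l; have pr := negbTE pivot_notin_r.
have wx := split_weight_ge0 x; have wy := split_weight_ge0 y.
have rl z : z \in r -> z \in l = false by move/notin_l_of_r/negbTE.
have lr z : z \in l -> z \in r = false by move/notin_r_of_l/negbTE.
rewrite !inE !mem_cat => /or3P [/eqP-> | xl | xr] /or3P [/eqP-> | yl | yr].
- by rewrite pl pr split_weight_p /pair_cost /absdiff subnn /=; lra.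
- rewrite pl pr /= split_weight_p pair_costC (split_weight_l yl).
  by have := pair_cost_out_lp yl; lra.
- rewrite pl pr /= split_weight_p (split_weight_r yr).
  by have := pair_cost_out_pr yr; lra.
- rewrite pl pr !andbF /= split_weight_p (split_weight_l xl).
  by have := pair_cost_out_lp xl; lra.
- rewrite xl yl (lr x xl) /= pair_cost_out_l //.
  by have := pair_cost_ge0 x y l; lra.
- rewrite xl (lr x xl) (rl y yr) /= (split_weight_l xl) (split_weight_r yr).
  by have := pair_cost_out_lr xl yr; lra.
- rewrite pl pr !andbF /= split_weight_p pair_costC (split_weight_r xr).
  by have := pair_cost_out_pr xr; lra.
- rewrite xr (rl x xr) (lr y yl) /= pair_costC (split_weight_l yl) (split_weight_r xr).
  by have := pair_cost_out_lr yl xr; lra.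
- rewrite xr yr (rl x xr) /= pair_cost_out_r //.
  by have := pair_cost_ge0 x y r; lra.
Qed.
End PivotSplit.

Lemma misplaced_absdiff p l r :
  misplaced p (fun x => INR (absdiff x p)) (l, r) =
  rsum (map (misplaced_left p) l) + rsum (map (misplaced_right p) r).
Proof.
by congr (rsum _ + rsum _); apply: eq_map => x;
  rewrite /misplaced_left /misplaced_right; case: ifP.
Qed.

Lemma sort_cost_split s p l r : uniq s -> perm_eq s (p :: l ++ r) ->
  sort_cost s (l ++ p :: r) <=
  sort_cost l l + sort_cost r r
  + 2 * INR (size s) * misplaced p (fun x => INR (absdiff x p)) (l, r).
Proof.
move=> uniq_s perm_s.
have uniq_plr : uniq (p :: l ++ r) by rewrite -(perm_uniq perm_s).
have [uniq_l uniq_r] : uniq l /\ uniq r.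
  by move: uniq_plr; rewrite cons_uniq cat_uniq => /andP [_ /and3P []].
have sub_l : {subset l <= s} by move=> z zl; rewrite (perm_mem perm_s) inE mem_cat zl orbT.
have sub_r : {subset r <= s} by move=> z zr; rewrite (perm_mem perm_s) inE mem_cat zr !orbT.
set A := fun x y => if (x \in l) && (y \in l) then pair_cost x y l else 0.
set B := fun x y => if (x \in r) && (y \in r) then pair_cost x y r else 0.
set M := rsum (map (split_weight p l r) s).
have -> : misplaced p (fun x => INR (absdiff x p)) (l, r) = M.
  rewrite misplaced_absdiff -(rsum_restrict _ uniq_s uniq_l sub_l).
  by rewrite -(rsum_restrict _ uniq_s uniq_r sub_r) -rsum_mapD.
apply: Rle_trans (_ : rsum [seq rsum [seq A x y | y <- s] + rsum [seq B x y | y <- s]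
                  + (INR (size s) * split_weight p l r x + M) | x <- s] <= _).
  apply: rsum_map_le => x xs.
  apply: Rle_trans (_ : rsum [seq A x y + B x y
                        + (split_weight p l r x + split_weight p l r y) | y <- s] <= _).
    apply: rsum_map_le => y; move: xs; rewrite !(perm_mem perm_s) => xs ys.
    exact (pair_cost_out_le uniq_plr xs ys).
  rewrite (rsum_mapD _ (fun y => A x y + B x y)) rsum_mapD.
  by rewrite (rsum_mapD _ (fun _ => split_weight p l r x)) rsum_map_const; apply: Rle_refl.
rewrite !rsum_mapD rsum_mapZ rsum_map_const -/M.
rewrite (rsum2_restrict _ uniq_s uniq_l sub_l) (rsum2_restrict _ uniq_s uniq_r sub_r).
by apply: Rplus_le_compat; [apply: Rle_refl | lra].
Qed.

Lemma misplaced_perm p f l r L R : perm_eq l L -> perm_eq r R ->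
  misplaced p f (l, r) = misplaced p f (L, R).
Proof. by move=> eq_lL eq_rR; rewrite /misplaced (rsum_perm _ eq_lL) (rsum_perm _ eq_rR). Qed.

Lemma sort_cost_pivot s p L R l r : uniq s -> perm_eq s (p :: L ++ R) ->
  perm_eq l L -> perm_eq r R ->
  sort_cost s (l ++ p :: r) <=
  sort_cost L l + sort_cost R r
  + 2 * INR (size s) * misplaced p (fun x => INR (absdiff x p)) (L, R).
Proof.
move=> uniq_s perm_s eq_lL eq_rR.
rewrite -(misplaced_perm _ _ eq_lL eq_rR) -(sort_cost_perm _ eq_lL) -(sort_cost_perm _ eq_rR).
by apply: sort_cost_split uniq_s _; rewrite (perm_trans perm_s) // perm_cons perm_sym perm_cat.
Qed.

(** * The quicksort recurrence *)

Lemma perm_pivot (s : seq nat) i : (i < size s)%N ->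
  perm_eq s (nth 0%N s i :: (take i s ++ drop i.+1 s)).
Proof.
move=> lt_i; rewrite -{1}(cat_take_drop i s) (drop_nth 0%N lt_i).
by rewrite -cat1s perm_catCA.
Qed.

Lemma size_pivot_rest (s : seq nat) i : (i < size s)%N ->
  (size (take i s ++ drop i.+1 s)).+1 = size s.
Proof. by move=> lt_i; rewrite [RHS](perm_size (perm_pivot lt_i)). Qed.

Lemma pivot_rest_facts n s p rest : uniq s -> all (fun x => x < 2 ^ n)%N s ->
  perm_eq s (p :: rest) ->
  [/\ (p < 2 ^ n)%N, all (fun x => x < 2 ^ n)%N rest, p \notin rest & uniq rest].
Proof.
move=> uniq_s s_lt perm_s; move: uniq_s s_lt.
by rewrite (perm_uniq perm_s) (perm_all _ perm_s) /= => /andP [? ?] /andP [? ?].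
Qed.

Lemma proba_quicksort e k s : proba (qs_fuel e k s) (fun out => perm_eq out s).
Proof.
elim: k s => [|k IH] s /=; first exact: proba_ret.
case: s => [|x s']; first exact: proba_ret.
set s := x :: s'.
apply: proba_bind (proba_unif (isT : 0 < size s)%N) _ => i lt_i.
apply: proba_bind (proba_partition _ _ _) _ => -[L R] /= perm_LR.
apply: proba_bind (IH L) _ => l eq_lL; apply: proba_bind (IH R) _ => r eq_rR.
apply: proba_ret; rewrite perm_sym (perm_trans (perm_pivot lt_i)) //.
by rewrite perm_sym perm_catC /= perm_cons perm_catC (perm_trans (perm_cat eq_lL eq_rR)).
Qed.

Lemma expect_quicksort_step e k s f : s != [::] ->
  expect (qs_fuel e k.+1 s) f =
  expect (dunif (iota 0 (size s))) (fun i =>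
    expect (partition_dist e (nth 0%N s i) (take i s ++ drop i.+1 s)) (fun lr =>
    expect (qs_fuel e k lr.1) (fun l =>
    expect (qs_fuel e k lr.2) (fun r => f (l ++ nth 0%N s i :: r))))).
Proof.
case: s => [//|x s] _; rewrite /= expect_bind.
apply: eq_expect => i; rewrite expect_bind; apply: eq_expect => lr.
rewrite expect_bind; apply: eq_expect => l.
by rewrite expect_bind; apply: eq_expect => r; rewrite expect_ret.
Qed.

Definition rank (s : seq nat) (x : nat) : nat := count (fun y => y < x)%N s.

Lemma rank_lt s x y : x \in s -> (x < y)%N -> (rank s x < rank s y)%N.
Proof.
move=> xs lt_xy.
have split_x : count (fun z => z < x.+1)%N s = (rank s x + count_mem x s)%N.
  rewrite -(count_predUI (fun z => z < x)%N (pred1 x)).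
  rewrite (@eq_count _ (predI _ _) pred0) ?count_pred0 ?addn0; last first.
    by move=> z /=; case: eqP => [->|]; rewrite ?ltnn ?andbF.
  by apply: eq_count => z /=; rewrite ltnS leq_eqVlt orbC.
have mem_x : (0 < count_mem x s)%N by rewrite lt0n; apply: contraL xs => /eqP/count_memPn.
apply: (@leq_trans (count (fun z => z < x.+1)%N s)); first by rewrite split_x; lia.
by apply: sub_count => z /= lt_z; apply: leq_trans lt_xy.
Qed.

Lemma rank_lt_size s x : x \in s -> (rank s x < size s)%N.
Proof.
move=> xs; rewrite /rank -(count_predC (fun y => y < x)%N s) -addn1 leq_add2l.
by rewrite -has_count; apply/hasP; exists x => //=; rewrite ltnn.
Qed.

Lemma rank_perm s : uniq s -> perm_eq (map (rank s) s) (iota 0 (size s)).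
Proof.
move=> uniq_s; have uniq_rank : uniq (map (rank s) s).
  rewrite map_inj_in_uniq // => x y xs ys eq_rank.
  by case: (ltngtP x y) => // [/(rank_lt xs) | /(rank_lt ys)]; rewrite eq_rank ltnn.
have sub_rank : {subset map (rank s) s <= iota 0 (size s)}.
  by move=> z /mapP [x xs ->]; rewrite mem_iota add0n rank_lt_size.
have [|_ eq_mem] := uniq_min_size uniq_rank sub_rank; first by rewrite size_map size_iota.
exact: uniq_perm (iota_uniq _ _) eq_mem.
Qed.

Lemma rank_pivot s i : (i < size s)%N ->
  count (fun x => x < nth 0%N s i)%N (take i s ++ drop i.+1 s) = rank s (nth 0%N s i).
Proof. by move=> lt_i; rewrite /rank (permP (perm_pivot lt_i)) /= ltnn. Qed.

Definition split_max (m r : nat) : nat := maxn r (m.-1 - r).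

Lemma sumn_split_max_SS k :
  sumn [seq split_max k.+2 r | r <- iota 0 k.+2] =
  (sumn [seq split_max k r | r <- iota 0 k] + 3 * k + 2)%N.
Proof.
have -> : iota 0 k.+2 = 0%N :: ([seq 1 + r | r <- iota 0 k] ++ [:: k.+1])%N.
  by rewrite -iotaDl (_ : k.+2 = 1 + (k + 1))%N ?iotaD //= addn1.
rewrite /= map_cat sumn_cat -map_comp /=.
have -> : [seq split_max k.+2 (1 + r) | r <- iota 0 k] = [seq (split_max k r).+1 | r <- iota 0 k].
  by apply/eq_in_map => r; rewrite mem_iota /split_max => /andP [_ lt_r]; lia.
have sumn_succ (f : nat -> nat) t : sumn [seq (f r).+1 | r <- t] = (sumn (map f t) + size t)%N.
  by elim: t => //= r t ->; lia.
by rewrite sumn_succ size_iota /split_max /=; lia.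
Qed.

Lemma sum_split_max m : (4 * sumn [seq split_max m r | r <- iota 0 m] <= 3 * (m * m))%N.
Proof.
suff [] : (4 * sumn [seq split_max m r | r <- iota 0 m] <= 3 * (m * m))%N /\
          (4 * sumn [seq split_max m.+1 r | r <- iota 0 m.+1] <= 3 * (m.+1 * m.+1))%N by [].
elim: m => [|m [IHm IHm1]]; first by [].
by split=> //; rewrite sumn_split_max_SS; nia.
Qed.

Lemma larger_side p rest L R : perm_eq (L ++ R) rest ->
  INR (maxn (size L) (size R)) <=
  INR (split_max (size rest).+1 (count (fun x => x < p)%N rest)) + misplaced p (fun _ => 1) (L, R).
Proof.
move=> perm_LR; rewrite /misplaced !rsum_map_indicator -plus_INR -plus_INR.
apply/le_INR/leP; rewrite /split_max -(perm_size perm_LR) size_cat.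
rewrite -(permP perm_LR) count_cat /=.
have := count_predC (fun x => x < p)%N L; have := count_predC (fun x => x < p)%N R.
have predC_lt t : count (predC (fun x => x < p)%N) t = count (leq p) t.
  by apply: eq_count => x /=; rewrite -leqNgt.
by rewrite !predC_lt; lia.
Qed.

Lemma expect_larger_side_size e p rest :
  expect (partition_dist e p rest) (fun lr => INR (maxn (size lr.1) (size lr.2)))
  <= INR (size rest).
Proof.
apply: expect_le_const (proba_partition e p rest) _ => -[L R] /= perm_LR.
by apply/le_INR/leP; rewrite -(perm_size perm_LR) size_cat geq_max leq_addr leq_addl.
Qed.

Lemma expect_larger_side n p rest : (p < 2 ^ n)%N -> all (fun x => x < 2 ^ n)%N rest ->
  p \notin rest -> uniq rest ->
  expect (partition_dist (e_a n) p rest) (fun lr => INR (maxn (size lr.1) (size lr.2)))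
  <= INR (split_max (size rest).+1 (count (fun x => x < p)%N rest)) + (129 + INR (size rest) / 8).
Proof.
move=> p_lt rest_lt p_notin uniq_rest; have [supp_part mass_part] := proba_partition (e_a n) p rest.
apply: Rle_trans (_ : expect (partition_dist (e_a n) p rest) (fun lr =>
    INR (split_max (size rest).+1 (count (fun x => x < p)%N rest))
    + misplaced p (fun _ => 1) lr) <= _).
  by apply: expect_le supp_part _ => -[L R]; apply: larger_side.
rewrite expectD expect_const mass_part.
by have := expect_misplaced_count p_lt rest_lt p_notin uniq_rest; lra.
Qed.

(* [cost_const * ln 2 >= 16 * 2063] covers the sizes up to 2064; beyond them the slack
   [m/8 - 129] left by the recurrence is at least [m/16]. *)
Definition cost_const : R := 131072.

Definition cost_bound (m : nat) : R := cost_const * (INR m * INR m) * ln (INR m).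

Lemma ln_INR_le a m : (0 < a)%N -> (a <= m)%N -> ln (INR a) <= ln (INR m).
Proof.
move=> a_gt0; rewrite leq_eqVlt => /orP [/eqP-> | lt_am]; first lra.
by apply/Rlt_le/ln_increasing; [apply/lt_0_INR/ltP | apply/lt_INR/ltP].
Qed.

Lemma ln_INR_ge0 m : (0 < m)%N -> 0 <= ln (INR m).
Proof. by move=> m_gt0; rewrite -ln_1; apply: (ln_INR_le (isT : 0 < 1)%N). Qed.

Lemma cost_const_ln_ge0 m : (0 < m)%N -> 0 <= cost_const * ln (INR m).
Proof. by move=> m_gt0; apply: Rmult_le_pos; [rewrite /cost_const; lra | apply: ln_INR_ge0]. Qed.

Lemma cost_bound_le a m : (a <= m)%N -> cost_bound a <= cost_const * ln (INR m) * (INR a * INR a).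
Proof.
rewrite /cost_bound; case: (posnP a) => [-> _ | a_gt0 le_am]; first by rewrite /=; lra.
have -> : cost_const * ln (INR m) * (INR a * INR a) = cost_const * (INR a * INR a) * ln (INR m).
  by ring.
apply: Rmult_le_compat_l; last exact: ln_INR_le.
by apply: Rmult_le_pos; [rewrite /cost_const; lra | apply: Rmult_le_pos; apply: pos_INR].
Qed.

Lemma cost_bound_pair a b m : (a + b <= m)%N ->
  cost_bound a + cost_bound b <= cost_const * ln (INR m) * INR m * INR (maxn a b).
Proof.
move=> le_abm; have [le_am le_bm] : (a <= m)%N /\ (b <= m)%N by lia.
case: (posnP m) => [m0 | m_gt0].
  by move: le_am le_bm; rewrite m0 !leqn0 => /eqP-> /eqP->; rewrite /cost_bound /=; lra.
apply: Rle_trans (Rplus_le_compat _ _ _ _ (cost_bound_le le_am) (cost_bound_le le_bm)) _.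
rewrite -Rmult_plus_distr_l [X in _ <= X]Rmult_assoc.
apply: Rmult_le_compat_l; first exact: cost_const_ln_ge0.
rewrite -!mult_INR -plus_INR; apply/le_INR/leP.
apply: (@leq_trans (maxn a b * a + maxn a b * b)).
  by apply: leq_add; apply: leq_mul; rewrite ?leq_maxl ?leq_maxr.
by rewrite -mulnDr mulnC leq_mul.
Qed.

Lemma half_lt_ln_INR m : (2 <= m)%N -> / 2 < ln (INR m).
Proof. by move=> m_ge2; apply: Rlt_le_trans ln_lt_2 (ln_INR_le _ m_ge2). Qed.

Lemma cost_bound_step_small m : (0 < m)%N -> (m <= 2064)%N ->
  cost_const * ln (INR m) * INR m * (INR m - 1) + 16 * INR m * (INR m - 1) <= cost_bound m.
Proof.
move=> m_gt0 m_le; rewrite /cost_bound.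
have x_le : INR m <= 2064.
  by rewrite (_ : 2064 = INR 2064); [apply/le_INR/leP | rewrite INR_IZR_INZ].
have key : 16 * (INR m - 1) <= cost_const * ln (INR m).
  case: (leqP m 1) => [m_le1 | m_ge2].
    have -> : m = 1%N by lia.
    by rewrite ln_1 /=; lra.
  by have := half_lt_ln_INR m_ge2; rewrite /cost_const; lra.
by have := Rmult_le_compat_l _ _ _ (pos_INR m) key; lra.
Qed.

Lemma cost_bound_step_large m : (2064 < m)%N ->
  cost_const * ln (INR m) * INR m * (3 / 4 * INR m)
  + (cost_const * ln (INR m) * INR m * (129 + (INR m - 1) / 8) + 16 * INR m * (INR m - 1))
  <= cost_bound m.
Proof.
move=> m_gt; rewrite /cost_bound.
have x_gt : 2064 < INR m.
  by rewrite (_ : 2064 = INR 2064); [apply/lt_INR/ltP | rewrite INR_IZR_INZ].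
have KL : 65536 <= cost_const * ln (INR m).
  by have := @half_lt_ln_INR m (leq_trans (isT : 2 <= 2065)%N m_gt); rewrite /cost_const; lra.
have sq : 0 <= INR m * (INR m - 1031) by apply: Rmult_le_pos; lra.
have := Rmult_le_compat_r _ _ _ sq KL.
by have := Rmult_le_compat_r _ _ _ (pos_INR m) (Rlt_le _ _ x_gt); lra.
Qed.

Lemma average_split_max s : uniq s -> (0 < size s)%N ->
  expect (dunif (iota 0 (size s))) (fun i => INR (split_max (size s) (rank s (nth 0%N s i))))
  <= 3 / 4 * INR (size s).
Proof.
move=> uniq_s s_gt0; rewrite expect_unif size_iota.
rewrite (_ : [seq INR (split_max (size s) (rank s (nth 0%N s i))) | i <- iota 0 (size s)]
        = [seq INR (split_max (size s) r) | r <- map (rank s) (map (nth 0%N s) (iota 0 (size s)))]);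
  last by rewrite -!map_comp.
rewrite map_nth_iota0 // take_size.
rewrite (rsum_perm _ (rank_perm uniq_s)) rsum_map_nat.
have m_gt0 : 0 < INR (size s) by apply/lt_0_INR/ltP.
have sum_le : INR (sumn [seq split_max (size s) r | r <- iota 0 (size s)])
              <= 3 / 4 * (INR (size s) * INR (size s)).
  have := le_INR _ _ (elimT leP (sum_split_max (size s))).
  rewrite !mult_INR (_ : INR 4 = 4); last by rewrite INR_IZR_INZ.
  by rewrite (_ : INR 3 = 3); [lra | rewrite INR_IZR_INZ].
have -> : 3 / 4 * INR (size s) = / INR (size s) * (3 / 4 * (INR (size s) * INR (size s))).
  by field; lra.
by apply: Rmult_le_compat_l sum_le; apply/Rlt_le/Rinv_0_lt_compat.
Qed.

Section QuicksortRecursion.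
Variables n k : nat.
Hypothesis cost_IH : forall t, uniq t -> all (fun x => x < 2 ^ n)%N t -> (size t <= k)%N ->
  expect (qs_fuel (e_a n) k t) (sort_cost t) <= cost_bound (size t).

Lemma recursive_calls_cost s p L R : uniq s -> all (fun x => x < 2 ^ n)%N s ->
  (size s <= k.+1)%N -> perm_eq s (p :: L ++ R) ->
  expect (qs_fuel (e_a n) k L) (fun l =>
  expect (qs_fuel (e_a n) k R) (fun r => sort_cost s (l ++ p :: r)))
  <= cost_const * ln (INR (size s)) * INR (size s) * INR (maxn (size L) (size R))
     + 2 * INR (size s) * misplaced p (fun x => INR (absdiff x p)) (L, R).
Proof.
move=> uniq_s s_lt size_s perm_s.
have uniq_LR : uniq (L ++ R) by move: uniq_s; rewrite (perm_uniq perm_s) cons_uniq => /andP [].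
have sub_LR : {subset L ++ R <= s} by move=> x xLR; rewrite (perm_mem perm_s) inE xLR orbT.
have size_LR : (size L + size R).+1 = size s by rewrite (perm_size perm_s) /= size_cat.
have [uniq_L uniq_R] : uniq L /\ uniq R by move: uniq_LR; rewrite cat_uniq => /and3P [].
have lt_of t : {subset t <= L ++ R} -> all (fun x => x < 2 ^ n)%N t.
  by move=> sub_t; apply/allP => x /sub_t /sub_LR; apply: (allP s_lt).
have [supp_L mass_L] := proba_quicksort (e_a n) k L.
have [supp_R mass_R] := proba_quicksort (e_a n) k R.
set M := 2 * INR (size s) * misplaced p (fun x => INR (absdiff x p)) (L, R).
apply: Rle_trans (_ : expect (qs_fuel (e_a n) k L) (fun l => expect (qs_fuel (e_a n) k R)
    (fun r => sort_cost L l + sort_cost R r + M)) <= _).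
  apply: expect_le supp_L _ => l eq_lL; apply: expect_le supp_R _ => r eq_rR.
  exact: sort_cost_pivot.
have size_L : (size L <= k)%N by lia.
have size_R : (size R <= k)%N by lia.
rewrite expect_pairD // -/M.
have IH_L : expect (qs_fuel (e_a n) k L) (sort_cost L) <= cost_bound (size L).
  by apply: cost_IH uniq_L (lt_of L _) size_L => x xL; rewrite mem_cat xL.
have IH_R : expect (qs_fuel (e_a n) k R) (sort_cost R) <= cost_bound (size R).
  by apply: cost_IH uniq_R (lt_of R _) size_R => x xR; rewrite mem_cat xR orbT.
have := @cost_bound_pair (size L) (size R) (size s); rewrite -size_LR => /(_ (leqnSn _)).
lra.
Qed.

Lemma pivot_cost s p rest : uniq s -> all (fun x => x < 2 ^ n)%N s ->
  (size s <= k.+1)%N -> perm_eq s (p :: rest) ->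
  expect (partition_dist (e_a n) p rest) (fun lr =>
  expect (qs_fuel (e_a n) k lr.1) (fun l =>
  expect (qs_fuel (e_a n) k lr.2) (fun r => sort_cost s (l ++ p :: r))))
  <= cost_const * ln (INR (size s)) * INR (size s)
       * expect (partition_dist (e_a n) p rest) (fun lr => INR (maxn (size lr.1) (size lr.2)))
     + 16 * INR (size s) * (INR (size s) - 1).
Proof.
move=> uniq_s s_lt size_s perm_s.
have [supp_part _] := proba_partition (e_a n) p rest.
apply: Rle_trans (_ : expect (partition_dist (e_a n) p rest) (fun lr =>
    cost_const * ln (INR (size s)) * INR (size s) * INR (maxn (size lr.1) (size lr.2))
    + 2 * INR (size s) * misplaced p (fun x => INR (absdiff x p)) lr) <= _).
  apply: expect_le supp_part _ => -[L R] /= perm_LR.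
  apply: recursive_calls_cost => //; apply: perm_trans perm_s _.
  by rewrite perm_cons perm_sym.
rewrite expectD !expectZ; apply: Rplus_le_compat_l.
have [p_lt rest_lt p_notin _] := pivot_rest_facts uniq_s s_lt perm_s.
have weight_le := expect_misplaced_weight p_lt rest_lt p_notin.
have size_s' : INR (size s) = INR (size rest) + 1 by rewrite (perm_size perm_s) -S_INR.
have factor_ge0 : 0 <= 2 * INR (size s) by have := pos_INR (size s); lra.
apply: Rle_trans (Rmult_le_compat_l _ _ _ factor_ge0 weight_le) _.
by rewrite size_s'; set x := INR (size rest); apply: Req_le; ring.
Qed.

Lemma quicksort_cost_step s : uniq s -> all (fun x => x < 2 ^ n)%N s -> (size s <= k.+1)%N ->
  expect (qs_fuel (e_a n) k.+1 s) (sort_cost s) <= cost_bound (size s).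
Proof.
case: s => [|x s']; first by rewrite expect_ret /sort_cost /cost_bound /= rsum_nil; lra.
set s := x :: s' => uniq_s s_lt size_s; rewrite expect_quicksort_step //.
have s_gt0 : (0 < size s)%N by [].
set c := cost_const * ln (INR (size s)) * INR (size s).
have c_ge0 : 0 <= c by apply: Rmult_le_pos; [exact: cost_const_ln_ge0 | exact: pos_INR].
have size_rest i : (i < size s)%N -> INR (size (take i s ++ drop i.+1 s)) = INR (size s) - 1.
  by move=> lt_i; rewrite -(size_pivot_rest lt_i) S_INR Rplus_minus_r.
case: (leqP (size s) 2064) => [small | large].
  apply: expect_le_const (proba_unif s_gt0) _ => i lt_i.
  apply: Rle_trans (pivot_cost uniq_s s_lt size_s (perm_pivot lt_i)) _.
  apply: Rle_trans (cost_bound_step_small s_gt0 small); apply: Rplus_le_compat_r.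
  apply: Rmult_le_compat_l c_ge0 _; rewrite -(size_rest i) //.
  exact: expect_larger_side_size.
apply: Rle_trans (_ : expect (dunif (iota 0 (size s))) (fun i =>
    c * INR (split_max (size s) (rank s (nth 0%N s i)))
    + (c * (129 + (INR (size s) - 1) / 8) + 16 * INR (size s) * (INR (size s) - 1))) <= _).
  apply: expect_le (proba_supp (proba_unif s_gt0)) _ => i lt_i.
  apply: Rle_trans (pivot_cost uniq_s s_lt size_s (perm_pivot lt_i)) _.
  rewrite -Rplus_assoc -Rmult_plus_distr_l; apply: Rplus_le_compat_r.
  apply: Rmult_le_compat_l c_ge0 _.
  have [p_lt rest_lt p_notin uniq_rest] := pivot_rest_facts uniq_s s_lt (perm_pivot lt_i).
  have := expect_larger_side p_lt rest_lt p_notin uniq_rest.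
  by rewrite rank_pivot // size_pivot_rest // (size_rest i).
rewrite expect_affine ?(proba_mass (proba_unif s_gt0)) //.
apply: Rle_trans (cost_bound_step_large large); apply: Rplus_le_compat_r.
by apply: Rmult_le_compat_l c_ge0 _; apply: average_split_max.
Qed.

End QuicksortRecursion.

Lemma qs_fuel_cost n k s : uniq s -> all (fun x => x < 2 ^ n)%N s -> (size s <= k)%N ->
  expect (qs_fuel (e_a n) k s) (sort_cost s) <= cost_bound (size s).
Proof.
elim: k s => [|k IH] s; last exact: quicksort_cost_step.
by case: s => // _ _ _; rewrite expect_ret /sort_cost /cost_bound /= rsum_nil; lra.
Qed.

Lemma rsum_allpairs (s t : seq nat) (g : nat * nat -> R) :
  rsum (map g [seq (a, b) | a <- s, b <- t]) = rsum [seq rsum [seq g (a, b) | b <- t] | a <- s].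
Proof.
elim: s => [|a s IH] //.
by rewrite allpairs_cons map_cat rsum_cat IH map_cons rsum_cons -map_comp.
Qed.

Lemma map_iota_nth (T : Type) (s : seq nat) (f : nat -> T) :
  [seq f (nth 0%N s i) | i <- iota 0 (size s)] = map f s.
Proof.
have nth_s : [seq nth 0%N s i | i <- iota 0 (size s)] = s by rewrite map_nth_iota0 // take_size.
by rewrite -[in RHS]nth_s -map_comp.
Qed.

Lemma wkt_le_expected_cost e C : wkt C e <= expect (quicksort e C) (sort_cost C).
Proof.
rewrite /wkt; set d := quicksort e C.
have [supp_d _] := proba_quicksort e (size C) C.
apply: Rle_trans (rsum_filter_le _ _ _) _.
  move=> ab; apply: Rmult_le_pos; first exact: Rabs_pos.
  by rewrite dprob_expect; apply: expect_ge0 supp_d _ => out _; case: ifP; lra.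
rewrite rsum_allpairs /sort_cost expect_rsum; apply: Req_le.
rewrite -[X in _ = rsum X]map_iota_nth; congr rsum; apply: eq_map => a.
rewrite expect_rsum -[X in _ = rsum X]map_iota_nth; congr rsum; apply: eq_map => b.
by rewrite INR_absdiff dprob_expect -expectZ.
Qed.

Theorem lemma4 :
  exists (K : R) (N0 : nat),
    forall (n : nat) (C : seq nat),
      uniq C ->
      all (fun x => (x < expn 2 n)%N) C ->
      (N0 <= size C)%N ->
      Rle (wkt C (e_a n)) (Rmult K (Rmult (pow (INR (size C)) 2) (ln (INR (size C))))).
Proof.
exists cost_const, 0%N => n C uniq_C C_lt _.
apply: Rle_trans (wkt_le_expected_cost _ _) _.
apply: Rle_trans (qs_fuel_cost uniq_C C_lt (leqnn _)) _.
by rewrite /cost_bound /=; apply: Req_le; ring.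
Qed.
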